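(* Let $\Psi(x)=I_1(x)/I_0(x)$ for $x>0$ and define $$\lambda(x)=\frac{\log\left(1-\frac{2}{x}\Psi(x)\right)}{\log\Psi(x)},\qquad x>0.$$ Then $2<\lambda(x)<4$ for all $x>0$, and $$\lim_{x\to0^+}\lambda(x)=2,\qquad \lim_{x\to\infty}\lambda(x)=4.$$ Consequently the constants $2$ and $4$ are the best possible, i.e. in the inequality $\sqrt{1-\frac1K}<r<\sqrt[4]{1-\frac1K}$, valid for $K>1$ and $r>0$ solving $r=\Psi(2Kr)$, the exponents $\frac12$ and $\frac14$ cannot be improved.
   Context: $I_\nu$ denotes the modified Bessel function of the first kind of order $\nu$. *)

From Stdlib Require Import Reals Factorial.
From Coquelicot Require Import Coquelicot.
Open Scope R_scope.

Definition besselI (nu : nat) (x : R) : R :=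
  Series (fun k => (x / 2) ^ (2 * k + nu) / (INR (fact k) * INR (fact (k + nu)))).

Definition Psi (x : R) : R := besselI 1 x / besselI 0 x.

Definition lambda (x : R) : R := ln (1 - (2 / x) * Psi x) / ln (Psi x).

From Stdlib Require Import Reals Lra Lia Factorial Classical.
From Coquelicot Require Import Coquelicot.
Open Scope R_scope.

(* With F_nu(t) = sum_k t^k / (k! (k+nu)!) (bessel_series nu) we have
   I_nu(x) = (x/2)^nu F_nu(x^2/4), so Psi = (x/2) F_1/F_0, and the recurrence
   F_0 - F_1 = t F_2 makes Psi a solution of the Riccati equation Psi' = 1 - Psi/x - Psi^2.  Put Theta(x) = 1 - 2 Psi(x)/x, so that
   lambda = ln Theta / ln Psi and 2 < lambda < 4 means Psi^4 < Theta < Psi^2.  Both gaps are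
   of order x^2 near 0 and, by the Riccati equation, have positive slope wherever they
   vanish, so they never vanish.  Near 0, Psi^2/Theta stays bounded while ln Psi -> -oo,
   whence lambda -> 2.  Near +oo the Riccati equation eventually pushes x (1 - Psi) below
   1/2 + eps, while ln z <= z - 1 gives lambda x (1 - Psi) >= 2 Psi^2, whence lambda -> 4.
   Finally r = Psi(2Kr) means r = Psi(x) and 1 - 1/K = Theta(x) = Psi(x)^lambda(x) with
   x = 2Kr, so the optimal exponents are the limits 1/2 and 1/4 of 1/lambda. *)

Lemma continuity_pt_near (g : R -> R) x e :
  continuity_pt g x -> 0 < e ->
  exists d, 0 < d /\ forall y, Rabs (y - x) < d -> Rabs (g y - g x) < e.
Proof.
  intros Hc He. destruct (Hc e He) as [d [Hd Hnear]].
  exists d. split; [exact Hd |]. intros y Hy.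
  destruct (Req_dec x y) as [<- | Hxy]; [rewrite Rminus_diag, Rabs_R0; exact He |].
  apply Hnear. repeat split; assumption.
Qed.

Lemma continuity_pt_pos_near (g : R -> R) x :
  continuity_pt g x -> 0 < g x -> exists d, 0 < d /\ forall y, Rabs (y - x) < d -> 0 < g y.
Proof.
  intros Hc Hg. destruct (continuity_pt_near g x (g x) Hc Hg) as [d [Hd Hnear]].
  exists d. split; [exact Hd |]. intros y Hy.
  specialize (Hnear y Hy). apply Rabs_def2 in Hnear. lra.
Qed.

Lemma is_derive_continuity_pt (f : R -> R) x l : is_derive f x l -> continuity_pt f x.
Proof.
  intro H. apply continuity_pt_filterlim, (ex_derive_continuous (V := R_NormedModule)).
  exists l. exact H.
Qed.

Lemma first_zero (f : R -> R) a b :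
  a < b -> (forall x, a <= x <= b -> continuity_pt f x) -> 0 < f a -> f b <= 0 ->
  exists c, a < c <= b /\ f c = 0 /\ forall w, a <= w < c -> 0 < f w.
Proof.
  intros Hab Hcont Ha Hb.
  set (E z := a <= z <= b /\ forall w, a <= w <= z -> 0 < f w).
  assert (HEa : E a) by (split; [lra | intros w Hw; replace w with a by lra; exact Ha]).
  assert (HEb : bound E) by (exists b; intros z [Hz _]; lra).
  destruct (completeness E HEb (ex_intro _ a HEa)) as [m [Hub Hlub]].
  assert (Ham : a <= m) by (apply Hub, HEa).
  assert (Hmb : m <= b) by (apply Hlub; intros z [Hz _]; lra).
  assert (Hleft : forall w, a <= w < m -> 0 < f w).
  { intros w Hw. destruct (Rlt_or_le 0 (f w)) as [Hfw | Hfw]; [exact Hfw | exfalso].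
    assert (m <= w); [| lra].
    apply Hlub. intros z [Hz Hpos]. destruct (Rle_or_lt z w) as [Hzw | Hwz]; [exact Hzw |].
    specialize (Hpos w ltac:(lra)). lra. }
  destruct (Rtotal_order (f m) 0) as [Hneg | [Hzero | Hpos]].
  - exfalso.
    assert (Ham' : a < m) by (destruct Ham as [Ham | <-]; lra).
    destruct (continuity_pt_pos_near (fun y => - f y) m
                (continuity_pt_opp f m (Hcont m ltac:(lra))) ltac:(lra)) as [d [Hd Hnear]].
    set (w := Rmax a (m - d / 2)).
    assert (Hw : a <= w < m) by (split; [apply Rmax_l | apply Rmax_lub_lt; lra]).
    assert (Hwd : Rabs (w - m) < d).
    { rewrite Rabs_left by lra. pose proof (Rmax_r a (m - d / 2)). unfold w in *. lra. }
    specialize (Hnear w Hwd). specialize (Hleft w Hw). simpl in Hnear. lra.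
  - exists m. split; [| split; assumption].
    split; [| exact Hmb]. destruct Ham as [Ham | <-]; [exact Ham | lra].
  - exfalso.
    destruct (continuity_pt_pos_near f m (Hcont m ltac:(lra)) Hpos) as [d [Hd Hnear]].
    assert (Hmb' : m < b) by (destruct Hmb as [Hmb | ->]; lra).
    set (z := Rmin (m + d / 2) b).
    assert (Hmz : m < z) by (apply Rmin_glb_lt; lra).
    assert (Hzd : z <= m + d / 2) by apply Rmin_l.
    assert (HEz : E z).
    { split; [split; [lra | apply Rmin_r] |].
      intros w Hw. destruct (Rlt_or_le w m) as [Hwm | Hmw]; [apply Hleft; lra |].
      apply Hnear. rewrite Rabs_pos_eq; lra. }
    specialize (Hub z HEz). lra.
Qed.

Lemma derive_pos_at_zero_neg_left (f : R -> R) c l a :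
  is_derive f c l -> 0 < l -> f c = 0 -> a < c -> exists w, a <= w < c /\ f w < 0.
Proof.
  intros Hd Hl Hc Hac. apply is_derive_Reals in Hd.
  destruct (Hd l Hl) as [d Hnear].
  set (h := - Rmin (d / 2) ((c - a) / 2)).
  assert (Hmin : 0 < Rmin (d / 2) ((c - a) / 2)) by (apply Rmin_pos; pose proof (cond_pos d); lra).
  assert (Hh : h < 0) by (unfold h; lra).
  assert (Hhd : Rabs h < d).
  { unfold h. rewrite Rabs_Ropp, Rabs_pos_eq by lra.
    pose proof (Rmin_l (d / 2) ((c - a) / 2)). pose proof (cond_pos d). lra. }
  specialize (Hnear h ltac:(lra) Hhd). rewrite Hc in Hnear. apply Rabs_def2 in Hnear.
  exists (c + h). split.
  - unfold h. pose proof (Rmin_r (d / 2) ((c - a) / 2)). lra.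
  - assert (Hq : 0 < (f (c + h) - 0) / h) by lra.
    replace (f (c + h)) with ((f (c + h) - 0) / h * h) by (field; lra). nra.
Qed.

Lemma stays_positive (f f' : R -> R) a :
  (forall x, a <= x -> is_derive f x (f' x)) -> 0 < f a ->
  (forall c, a < c -> f c = 0 -> 0 < f' c) -> forall x, a <= x -> 0 < f x.
Proof.
  intros Hd Ha Hzero b Hb.
  destruct (Rlt_or_le 0 (f b)) as [Hfb | Hfb]; [exact Hfb | exfalso].
  assert (Hab : a < b) by (destruct Hb as [Hb | <-]; lra).
  destruct (first_zero f a b Hab
              (fun x Hx => is_derive_continuity_pt f x _ (Hd x ltac:(lra))) Ha Hfb)
    as [c [Hc [Hfc Hleft]]].
  destruct (derive_pos_at_zero_neg_left f c (f' c) a (Hd c ltac:(lra))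
              (Hzero c ltac:(lra) Hfc) Hfc ltac:(lra)) as [w [Hw Hfw]].
  specialize (Hleft w Hw). lra.
Qed.

Lemma positive_on_pos_reals (f f' : R -> R) :
  (forall x, 0 < x -> is_derive f x (f' x)) ->
  (forall c, 0 < c -> f c = 0 -> 0 < f' c) ->
  (exists d, 0 < d /\ forall x, 0 < x < d -> 0 < f x) ->
  forall x, 0 < x -> 0 < f x.
Proof.
  intros Hd Hzero [d [Hd0 Hnear]] x Hx.
  destruct (Rlt_or_le x d) as [Hxd | Hdx]; [apply Hnear; lra |].
  apply (stays_positive f f' (d / 2)); try lra.
  - intros y Hy. apply Hd. lra.
  - apply Hnear. lra.
  - intros c Hc. apply Hzero. lra.
Qed.

Lemma eventually_below (f f' : R -> R) a c e :
  0 < e -> (forall x, a <= x -> is_derive f x (f' x)) ->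
  (forall x, a <= x -> c <= f x -> f' x <= - e) ->
  exists M, forall x, M <= x -> f x < c.
Proof.
  intros He Hd Hdec.
  (* Otherwise f >= c on [a, +oo) and f would drop by e T along [a, a + T]. *)
  assert (Hbelow : exists x1, a <= x1 /\ f x1 < c).
  { apply NNPP. intro Hnone.
    assert (Habove : forall x, a <= x -> c <= f x).
    { intros x Hx. apply Rnot_lt_le. intro Hlt. apply Hnone. exists x. split; assumption. }
    set (T := (Rabs (f a - c) + 1) / e).
    assert (HT : 0 < T) by (apply Rdiv_lt_0_compat; [pose proof (Rabs_pos (f a - c)) |]; lra).
    destruct (MVT_cor2 f f' a (a + T) ltac:(lra)
                (fun x Hx => proj1 (is_derive_Reals _ _ _) (Hd x ltac:(lra))))
      as [xi [Hmvt Hxi]].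
    assert (Hslope : f' xi <= - e) by (apply Hdec; [| apply Habove]; lra).
    assert (HeT : e * T = Rabs (f a - c) + 1) by (unfold T; field; lra).
    pose proof (Rle_abs (f a - c)). pose proof (Habove (a + T) ltac:(lra)).
    replace (a + T - a) with T in Hmvt by ring. nra. }
  destruct Hbelow as [x1 [Hx1 Hfx1]]. exists x1. intros x Hx.
  enough (0 < c - f x) by lra.
  apply (stays_positive (fun x => c - f x) (fun x => 0 - f' x) x1); [| lra | | exact Hx].
  - intros y Hy. exact (is_derive_minus _ _ y _ _ (is_derive_const c y) (Hd y ltac:(lra))).
  - intros y Hy Hzero. pose proof (Hdec y ltac:(lra) ltac:(lra)). lra.
Qed.

Definition bessel_coef (nu k : nat) : R := / (INR (fact k) * INR (fact (k + nu))).

Definition bessel_series (nu : nat) (t : R) : R := PSeries (bessel_coef nu) t.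

Lemma INR_fact_S n : INR (fact (S n)) = INR (S n) * INR (fact n).
Proof. rewrite fact_simpl, mult_INR. reflexivity. Qed.

Lemma bessel_coef_pos nu k : 0 < bessel_coef nu k.
Proof.
  apply Rinv_0_lt_compat, Rmult_lt_0_compat; apply INR_fact_lt_0.
Qed.

Lemma bessel_coef_ratio nu k :
  bessel_coef nu (S k) / bessel_coef nu k = / (INR (S k) * INR (S (k + nu))).
Proof.
  unfold bessel_coef. rewrite Nat.add_succ_l, !INR_fact_S.
  pose proof (INR_fact_lt_0 k). pose proof (INR_fact_lt_0 (k + nu)).
  pose proof (lt_0_INR (S k) (Nat.lt_0_succ k)).
  pose proof (lt_0_INR (S (k + nu)) (Nat.lt_0_succ (k + nu))).
  field. repeat split; lra.
Qed.

Lemma CV_radius_bessel_coef nu : CV_radius (bessel_coef nu) = p_infty.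
Proof.
  apply CV_radius_infinite_DAlembert.
  - intro k. apply Rgt_not_eq, bessel_coef_pos.
  - apply is_lim_seq_le_le with (fun _ => 0) (fun k => / INR (S k)).
    + intro k. rewrite bessel_coef_ratio.
      pose proof (lt_0_INR (S k) (Nat.lt_0_succ k)).
      assert (1 <= INR (S (k + nu))) by (apply (le_INR 1); lia).
      assert (0 < / (INR (S k) * INR (S (k + nu)))) by (apply Rinv_0_lt_compat; nra).
      rewrite Rabs_pos_eq by lra. split; [lra |].
      apply Rinv_le_contravar; nra.
    + apply is_lim_seq_const.
    + apply (is_lim_seq_incr_1 (fun n => / INR n)).
      replace (Finite 0) with (Rbar_inv p_infty) by reflexivity.
      apply is_lim_seq_inv; [apply is_lim_seq_INR | discriminate].
Qed.

Lemma Rbar_lt_abs_p_infty x : Rbar_lt (Rabs x) p_infty.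
Proof. exact I. Qed.

Lemma PS_derive_bessel_coef nu k :
  PS_derive (bessel_coef nu) k = bessel_coef (S nu) k.
Proof.
  unfold PS_derive, bessel_coef. rewrite Nat.add_succ_l, Nat.add_succ_r, INR_fact_S.
  pose proof (INR_fact_lt_0 k). pose proof (INR_fact_lt_0 (S (k + nu))).
  pose proof (lt_0_INR (S k) (Nat.lt_0_succ k)).
  field. repeat split; lra.
Qed.

Lemma is_derive_bessel_series nu t : is_derive (bessel_series nu) t (bessel_series (S nu) t).
Proof.
  unfold bessel_series. rewrite <- (PSeries_ext _ _ _ (PS_derive_bessel_coef nu)).
  apply is_derive_PSeries. rewrite CV_radius_bessel_coef. apply Rbar_lt_abs_p_infty.
Qed.

Lemma bessel_series_at_0 nu : bessel_series nu 0 = / INR (fact nu).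
Proof. unfold bessel_series, bessel_coef. rewrite PSeries_0. simpl. field. apply INR_fact_neq_0. Qed.

Lemma PSeries_ge_head (a : nat -> R) t :
  CV_radius a = p_infty -> (forall n, 0 <= a n) -> 0 <= t -> a O <= PSeries a t.
Proof.
  intros Hr Ha Ht.
  assert (Hex : forall b, CV_radius b = p_infty -> ex_pseries b t).
  { intros b Hb. apply CV_radius_inside. rewrite Hb. apply Rbar_lt_abs_p_infty. }
  rewrite PSeries_decr_1 by (apply Hex; exact Hr).
  enough (0 <= PSeries (PS_decr_1 a) t) by nra.
  rewrite <- (PSeries_const_0 t). unfold PSeries. apply Series_le.
  - intro n. rewrite Rmult_0_l. split; [lra |].
    apply Rmult_le_pos; [apply Ha | apply pow_le, Ht].
  - pose proof (Hex _ (eq_trans (CV_radius_decr_1 a) Hr)) as Hd.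
    revert Hd. apply ex_series_ext. intro n. rewrite pow_n_pow. apply Rmult_comm.
Qed.

Lemma bessel_series_ge_value_at_0 nu t : 0 <= t -> bessel_series nu 0 <= bessel_series nu t.
Proof.
  intro Ht. unfold bessel_series at 1. rewrite PSeries_0.
  apply PSeries_ge_head; [apply CV_radius_bessel_coef | | exact Ht].
  intro n. apply Rlt_le, bessel_coef_pos.
Qed.

Lemma bessel_series_0_sub_1 t : bessel_series 0 t - bessel_series 1 t = t * bessel_series 2 t.
Proof.
  assert (Hex : forall nu, ex_pseries (bessel_coef nu) t).
  { intro nu. apply CV_radius_inside. rewrite CV_radius_bessel_coef. apply Rbar_lt_abs_p_infty. }
  unfold bessel_series. rewrite <- PSeries_incr_1, <- PSeries_minus by apply Hex.
  apply PSeries_ext. intros [|k].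
  - change (bessel_coef 0 0 - bessel_coef 1 0 = 0).
    unfold bessel_coef. simpl. field.
  - change (bessel_coef 0 (S k) - bessel_coef 1 (S k) = bessel_coef 2 k).
    unfold bessel_coef. rewrite !Nat.add_succ_r, !Nat.add_0_r, !INR_fact_S.
    pose proof (INR_fact_lt_0 k).
    pose proof (lt_0_INR (S k) (Nat.lt_0_succ k)).
    pose proof (lt_0_INR (S (S k)) (Nat.lt_0_succ (S k))).
    rewrite (S_INR (S k)). field. lra.
Qed.

Lemma besselI_bessel_series nu x : besselI nu x = (x / 2) ^ nu * bessel_series nu (x ^ 2 / 4).
Proof.
  unfold besselI, bessel_series, PSeries. rewrite <- Series_scal_l. apply Series_ext. intro k.
  unfold bessel_coef. rewrite pow_add, pow_mult.
  replace ((x / 2) ^ 2) with (x ^ 2 / 4) by field. unfold Rdiv. ring.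
Qed.

Definition besselF (nu : nat) (x : R) : R := bessel_series nu (x ^ 2 / 4).

Lemma is_derive_besselF nu x :
  is_derive (besselF nu) x (x / 2 * besselF (S nu) x).
Proof.
  apply (is_derive_comp (bessel_series nu) (fun x => x ^ 2 / 4)).
  - apply is_derive_bessel_series.
  - auto_derive; [exact I | field].
Qed.

Lemma besselF_at_0 nu : besselF nu 0 = / INR (fact nu).
Proof. unfold besselF. replace (0 ^ 2 / 4) with 0 by field. apply bessel_series_at_0. Qed.

Lemma besselF_ge nu x : / INR (fact nu) <= besselF nu x.
Proof.
  rewrite <- bessel_series_at_0. apply bessel_series_ge_value_at_0.
  assert (0 <= x ^ 2) by (simpl; nra). lra.
Qed.

Lemma besselF_0_sub_1 x : besselF 0 x - besselF 1 x = x ^ 2 / 4 * besselF 2 x.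
Proof. apply bessel_series_0_sub_1. Qed.

Lemma besselF_0_ge_1 x : 1 <= besselF 0 x.
Proof. pose proof (besselF_ge 0 x) as H. simpl in H. lra. Qed.

Lemma besselF_1_ge_1 x : 1 <= besselF 1 x.
Proof. pose proof (besselF_ge 1 x) as H. simpl in H. lra. Qed.

Lemma besselF_2_ge_half x : / 2 <= besselF 2 x.
Proof. pose proof (besselF_ge 2 x) as H. simpl in H. lra. Qed.

(* Psi and Theta vanish at 0 to orders 1 and 2; these are their regular cofactors. *)
Definition Psi_red (x : R) : R := besselF 1 x / besselF 0 x.
Definition Theta_red (x : R) : R := besselF 2 x / besselF 0 x.

Definition Theta (x : R) : R := 1 - 2 / x * Psi x.

Lemma Psi_eq_red x : Psi x = x / 2 * Psi_red x.
Proof.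
  unfold Psi, Psi_red. rewrite !besselI_bessel_series. fold (besselF 0 x) (besselF 1 x).
  pose proof (besselF_0_ge_1 x). field. lra.
Qed.

Lemma one_sub_Psi_red x : 1 - Psi_red x = x ^ 2 / 4 * Theta_red x.
Proof.
  unfold Psi_red, Theta_red. pose proof (besselF_0_ge_1 x). pose proof (besselF_0_sub_1 x).
  apply (Rmult_eq_reg_r (besselF 0 x)); [| lra].
  field_simplify; lra.
Qed.

Lemma Theta_eq_red x : x <> 0 -> Theta x = x ^ 2 / 4 * Theta_red x.
Proof.
  intro Hx. unfold Theta. rewrite Psi_eq_red, <- one_sub_Psi_red. field. exact Hx.
Qed.

Lemma Psi_red_pos x : 0 < Psi_red x.
Proof.
  pose proof (besselF_0_ge_1 x). pose proof (besselF_1_ge_1 x).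
  apply Rdiv_lt_0_compat; lra.
Qed.

Lemma Theta_red_pos x : 0 < Theta_red x.
Proof.
  pose proof (besselF_0_ge_1 x). pose proof (besselF_2_ge_half x).
  apply Rdiv_lt_0_compat; lra.
Qed.

Lemma Psi_red_le_1 x : Psi_red x <= 1.
Proof.
  pose proof (one_sub_Psi_red x). pose proof (Theta_red_pos x).
  assert (0 <= x ^ 2 / 4) by (simpl; nra). nra.
Qed.

Lemma Psi_pos x : 0 < x -> 0 < Psi x.
Proof.
  intro Hx. rewrite Psi_eq_red. pose proof (Psi_red_pos x). apply Rmult_lt_0_compat; lra.
Qed.

Lemma Psi_le_half x : 0 < x -> Psi x <= x / 2.
Proof. intro Hx. rewrite Psi_eq_red. pose proof (Psi_red_le_1 x). nra. Qed.

Definition Psi' (x : R) : R := 1 - Psi x / x - Psi x ^ 2.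

Lemma is_derive_Psi x : x <> 0 -> is_derive Psi x (Psi' x).
Proof.
  intro Hx. pose proof (besselF_0_ge_1 x).
  apply is_derive_ext with (fun t => t / 2 * besselF 1 t / besselF 0 t).
  { intro t. rewrite Psi_eq_red. unfold Psi_red, Rdiv. apply Rmult_assoc. }
  replace (Psi' x) with
    (((/ 2 * besselF 1 x + x / 2 * (x / 2 * besselF 2 x)) * besselF 0 x
      - x / 2 * besselF 1 x * (x / 2 * besselF 1 x)) / besselF 0 x ^ 2).
  - apply (is_derive_div (fun t => t / 2 * besselF 1 t) (besselF 0)); [| apply is_derive_besselF | lra].
    apply (is_derive_mult (fun t => t / 2) (besselF 1)).
    + auto_derive; [exact I | field].
    + apply is_derive_besselF.
    + intros; apply Rmult_comm.
  - unfold Psi'. rewrite Psi_eq_red. unfold Psi_red.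
    pose proof (besselF_0_sub_1 x).
    replace (x / 2 * (x / 2 * besselF 2 x)) with (besselF 0 x - besselF 1 x) by lra.
    field. lra.
Qed.

Lemma continuity_pt_besselF nu x : continuity_pt (besselF nu) x.
Proof. exact (is_derive_continuity_pt _ _ _ (is_derive_besselF nu x)). Qed.

Lemma continuity_pt_Psi_red x : continuity_pt Psi_red x.
Proof.
  apply continuity_pt_div; try apply continuity_pt_besselF.
  pose proof (besselF_0_ge_1 x). lra.
Qed.

Lemma continuity_pt_Theta_red x : continuity_pt Theta_red x.
Proof.
  apply continuity_pt_div; try apply continuity_pt_besselF.
  pose proof (besselF_0_ge_1 x). lra.
Qed.

Lemma Psi_red_at_0 : Psi_red 0 = 1.
Proof. unfold Psi_red. rewrite !besselF_at_0. simpl. field. Qed.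

Lemma Theta_red_at_0 : Theta_red 0 = / 2.
Proof. unfold Theta_red. rewrite !besselF_at_0. simpl. field. Qed.

Lemma red_bounds_near_0 :
  exists d, 0 < d /\ forall x, 0 < x < d ->
    x < 1 /\ 9 / 10 < Psi_red x /\ 2 / 5 < Theta_red x < 3 / 5.
Proof.
  destruct (continuity_pt_near Psi_red 0 (/ 10) (continuity_pt_Psi_red 0) ltac:(lra))
    as [d1 [Hd1 H1]].
  destruct (continuity_pt_near Theta_red 0 (/ 10) (continuity_pt_Theta_red 0) ltac:(lra))
    as [d2 [Hd2 H2]].
  exists (Rmin 1 (Rmin d1 d2)). split; [repeat apply Rmin_pos; lra |].
  intros x [Hx Hxd].
  pose proof (Rmin_l 1 (Rmin d1 d2)). pose proof (Rmin_r 1 (Rmin d1 d2)).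
  pose proof (Rmin_l d1 d2). pose proof (Rmin_r d1 d2).
  assert (Habs : Rabs (x - 0) = x) by (rewrite Rminus_0_r; apply Rabs_pos_eq; lra).
  specialize (H1 x ltac:(lra)). specialize (H2 x ltac:(lra)).
  rewrite Psi_red_at_0 in H1. rewrite Theta_red_at_0 in H2.
  apply Rabs_def2 in H1. apply Rabs_def2 in H2. lra.
Qed.

Lemma is_derive_Theta x : x <> 0 -> is_derive Theta x (2 * Psi x / x ^ 2 - 2 * Psi' x / x).
Proof.
  intro Hx. unfold Theta. auto_derive.
  - repeat split; [exact Hx | exists (Psi' x); apply is_derive_Psi, Hx].
  - change (fun t => Psi t) with Psi.
    rewrite (is_derive_unique _ _ _ (is_derive_Psi x Hx)). field. exact Hx.
Qed.

(* Slopes of Theta - Psi^4 and Psi^2 - Theta at a zero c, with u = Psi c, w = / c and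
   Psi' c = 1 - u w - u^2; they equal u (1 - u^2)^3 and u (1 - u^2) respectively. *)
Lemma pow4_gap_slope_pos (u w : R) :
  0 < u -> 0 < w -> 2 * u * w = 1 - u ^ 4 ->
  0 < 2 * u * w ^ 2 - 2 * (1 - u * w - u ^ 2) * w - 4 * u ^ 3 * (1 - u * w - u ^ 2).
Proof.
  intros Hu Hw Hzero.
  assert (Hu2 : 0 < 1 - u ^ 2) by nra.
  assert (Hw' : w = (1 - u ^ 4) / (2 * u)) by (apply (Rmult_eq_reg_l (2 * u)); [field_simplify |]; lra).
  replace (2 * u * w ^ 2 - 2 * (1 - u * w - u ^ 2) * w - 4 * u ^ 3 * (1 - u * w - u ^ 2))
    with (u * (1 - u ^ 2) ^ 3) by (rewrite Hw'; field; lra).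
  apply Rmult_lt_0_compat; [exact Hu | apply pow_lt, Hu2].
Qed.

Lemma sq_gap_slope_pos (u w : R) :
  0 < u -> 0 < w -> 2 * u * w = 1 - u ^ 2 ->
  0 < 2 * u * (1 - u * w - u ^ 2) - (2 * u * w ^ 2 - 2 * (1 - u * w - u ^ 2) * w).
Proof.
  intros Hu Hw Hzero.
  assert (Hu2 : 0 < 1 - u ^ 2) by nra.
  assert (Hw' : w = (1 - u ^ 2) / (2 * u)) by (apply (Rmult_eq_reg_l (2 * u)); [field_simplify |]; lra).
  replace (2 * u * (1 - u * w - u ^ 2) - (2 * u * w ^ 2 - 2 * (1 - u * w - u ^ 2) * w))
    with (u * (1 - u ^ 2)) by (rewrite Hw'; field; lra).
  apply Rmult_lt_0_compat; assumption.
Qed.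

Lemma Psi_pow4_lt_Theta x : 0 < x -> Psi x ^ 4 < Theta x.
Proof.
  intro Hx. enough (0 < Theta x - Psi x ^ 4) by lra. revert x Hx.
  apply (positive_on_pos_reals (fun x => Theta x - Psi x ^ 4)
           (fun x => (2 * Psi x / x ^ 2 - 2 * Psi' x / x) - INR 4 * Psi' x * Psi x ^ 3)).
  - intros x Hx. apply (is_derive_minus Theta (fun t => Psi t ^ 4)).
    + apply is_derive_Theta. lra.
    + apply is_derive_pow, is_derive_Psi. lra.
  - intros c Hc Hzero. unfold Theta in Hzero.
    assert (Hu : 0 < Psi c) by (apply Psi_pos, Hc).
    assert (Hw : 0 < / c) by (apply Rinv_0_lt_compat, Hc).
    replace (2 * Psi c / c ^ 2 - 2 * Psi' c / c - INR 4 * Psi' c * Psi c ^ 3)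
      with (2 * Psi c * (/ c) ^ 2 - 2 * (1 - Psi c * / c - Psi c ^ 2) * / c
            - 4 * Psi c ^ 3 * (1 - Psi c * / c - Psi c ^ 2))
      by (unfold Psi'; simpl; field; lra).
    apply pow4_gap_slope_pos; [exact Hu | exact Hw |].
    replace (2 * Psi c * / c) with (2 / c * Psi c) by (field; lra). lra.
  - destruct red_bounds_near_0 as [d [Hd Hnear]]. exists d. split; [exact Hd |].
    intros x Hx. destruct (Hnear x Hx) as [Hx1 [HP [HT _]]].
    rewrite Theta_eq_red, Psi_eq_red by lra. pose proof (Psi_red_le_1 x).
    replace (x ^ 2 / 4 * Theta_red x - (x / 2 * Psi_red x) ^ 4)
      with (x ^ 2 / 4 * (Theta_red x - x ^ 2 / 4 * Psi_red x ^ 4)) by field.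
    apply Rmult_lt_0_compat; [simpl; nra |].
    assert (Psi_red x ^ 4 <= 1) by (rewrite <- (pow1 4); apply pow_incr; lra).
    assert (x ^ 2 / 4 < / 4) by (simpl; nra). nra.
Qed.

Lemma Theta_lt_Psi_sq x : 0 < x -> Theta x < Psi x ^ 2.
Proof.
  intro Hx. enough (0 < Psi x ^ 2 - Theta x) by lra. revert x Hx.
  apply (positive_on_pos_reals (fun x => Psi x ^ 2 - Theta x)
           (fun x => INR 2 * Psi' x * Psi x ^ 1 - (2 * Psi x / x ^ 2 - 2 * Psi' x / x))).
  - intros x Hx. apply (is_derive_minus (fun t => Psi t ^ 2) Theta).
    + apply is_derive_pow, is_derive_Psi. lra.
    + apply is_derive_Theta. lra.
  - intros c Hc Hzero. unfold Theta in Hzero.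
    assert (Hu : 0 < Psi c) by (apply Psi_pos, Hc).
    assert (Hw : 0 < / c) by (apply Rinv_0_lt_compat, Hc).
    replace (INR 2 * Psi' c * Psi c ^ 1 - (2 * Psi c / c ^ 2 - 2 * Psi' c / c))
      with (2 * Psi c * (1 - Psi c * / c - Psi c ^ 2)
            - (2 * Psi c * (/ c) ^ 2 - 2 * (1 - Psi c * / c - Psi c ^ 2) * / c))
      by (unfold Psi'; simpl; field; lra).
    apply sq_gap_slope_pos; [exact Hu | exact Hw |].
    replace (2 * Psi c * / c) with (2 / c * Psi c) by (field; lra). lra.
  - destruct red_bounds_near_0 as [d [Hd Hnear]]. exists d. split; [exact Hd |].
    intros x Hx. destruct (Hnear x Hx) as [Hx1 [HP [_ HT]]].
    rewrite Theta_eq_red, Psi_eq_red by lra.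
    replace ((x / 2 * Psi_red x) ^ 2 - x ^ 2 / 4 * Theta_red x)
      with (x ^ 2 / 4 * (Psi_red x ^ 2 - Theta_red x)) by field.
    apply Rmult_lt_0_compat; [simpl; nra | simpl; nra].
Qed.

Lemma Theta_pos x : 0 < x -> 0 < Theta x.
Proof.
  intro Hx. pose proof (Psi_pow4_lt_Theta x Hx). pose proof (Psi_pos x Hx).
  assert (0 < Psi x ^ 4) by (apply pow_lt; lra). lra.
Qed.

Lemma Psi_lt_1 x : 0 < x -> Psi x < 1.
Proof.
  intro Hx. pose proof (Psi_pow4_lt_Theta x Hx). pose proof (Psi_pos x Hx).
  assert (0 < 2 / x * Psi x) by (apply Rmult_lt_0_compat; [apply Rdiv_lt_0_compat |]; lra).
  unfold Theta in *. destruct (Rlt_or_le (Psi x) 1) as [Hlt | Hge]; [exact Hlt |].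
  assert (1 <= Psi x ^ 4) by (rewrite <- (pow1 4); apply pow_incr; lra). lra.
Qed.

Lemma ln_Psi_neg x : 0 < x -> ln (Psi x) < 0.
Proof.
  intro Hx. rewrite <- ln_1. apply ln_increasing; [apply Psi_pos | apply Psi_lt_1]; exact Hx.
Qed.

Lemma ln_Theta x : 0 < x -> ln (Theta x) = lambda x * ln (Psi x).
Proof. intro Hx. pose proof (ln_Psi_neg x Hx). unfold lambda. fold (Theta x). field. lra. Qed.

Lemma lambda_bounds x : 0 < x -> 2 < lambda x < 4.
Proof.
  intro Hx. pose proof (Psi_pos x Hx). pose proof (ln_Psi_neg x Hx).
  assert (H4 : ln (Psi x ^ 4) < ln (Theta x)).
  { apply ln_increasing; [apply pow_lt, H | apply Psi_pow4_lt_Theta, Hx]. }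
  assert (H2 : ln (Theta x) < ln (Psi x ^ 2)).
  { apply ln_increasing; [apply Theta_pos, Hx | apply Theta_lt_Psi_sq, Hx]. }
  rewrite ln_pow in H4, H2 by exact H. rewrite ln_Theta in H4, H2 by exact Hx.
  simpl INR in H4, H2. split; nra.
Qed.

Lemma Theta_eq_Rpower x : 0 < x -> Theta x = Rpower (Psi x) (lambda x).
Proof.
  intro Hx. unfold Rpower. rewrite <- ln_Theta by exact Hx.
  symmetry. apply exp_ln, Theta_pos, Hx.
Qed.

Lemma Rpower_antitone_exponent (b e1 e2 : R) :
  0 < b < 1 -> e1 <= e2 -> Rpower b e2 <= Rpower b e1.
Proof.
  intros Hb He. assert (Hln : ln b < 0) by (rewrite <- ln_1; apply ln_increasing; lra).
  unfold Rpower. destruct He as [Hlt | <-]; [| lra].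
  left. apply exp_increasing. nra.
Qed.

Lemma Psi_le_Rpower_Theta x p : 0 < x -> p * lambda x <= 1 -> Psi x <= Rpower (Theta x) p.
Proof.
  intros Hx Hp. rewrite Theta_eq_Rpower, Rpower_mult by exact Hx.
  rewrite <- (Rpower_1 (Psi x)) at 1 by apply Psi_pos, Hx.
  apply Rpower_antitone_exponent; [split; [apply Psi_pos | apply Psi_lt_1]; exact Hx | lra].
Qed.

Lemma Rpower_Theta_le_Psi x q : 0 < x -> 1 <= q * lambda x -> Rpower (Theta x) q <= Psi x.
Proof.
  intros Hx Hq. rewrite Theta_eq_Rpower, Rpower_mult by exact Hx.
  rewrite <- (Rpower_1 (Psi x)) at 2 by apply Psi_pos, Hx.
  apply Rpower_antitone_exponent; [split; [apply Psi_pos | apply Psi_lt_1]; exact Hx | lra].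
Qed.

Definition K_of (x : R) : R := x / (2 * Psi x).

Lemma K_of_gt_1 x : 0 < x -> 1 < K_of x.
Proof.
  intro Hx. pose proof (Psi_pos x Hx). pose proof (Theta_pos x Hx). unfold Theta in *.
  unfold K_of. apply (Rmult_lt_reg_r (2 * Psi x)); [lra |].
  replace (x / (2 * Psi x) * (2 * Psi x)) with x by (field; lra).
  apply (Rmult_lt_reg_l (/ x)); [apply Rinv_0_lt_compat, Hx |].
  replace (/ x * x) with 1 by (field; lra). replace (/ x * (1 * (2 * Psi x))) with (2 / x * Psi x)
    by (field; lra). lra.
Qed.

Lemma two_K_of_Psi x : 0 < x -> 2 * K_of x * Psi x = x.
Proof. intro Hx. pose proof (Psi_pos x Hx). unfold K_of. field. lra. Qed.

Lemma one_sub_inv_K_of x : 0 < x -> 1 - 1 / K_of x = Theta x.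
Proof. intro Hx. pose proof (Psi_pos x Hx). unfold K_of, Theta. field. lra. Qed.

Lemma fixed_point_bounds K r :
  1 < K -> 0 < r -> r = Psi (2 * K * r) -> r ^ 4 < 1 - 1 / K < r ^ 2.
Proof.
  intros HK Hr Hfix. assert (Hx : 0 < 2 * K * r) by nra.
  replace (1 - 1 / K) with (Theta (2 * K * r)) by (unfold Theta; rewrite <- Hfix; field; lra).
  set (x := 2 * K * r) in *. rewrite Hfix.
  split; [apply Psi_pow4_lt_Theta | apply Theta_lt_Psi_sq]; exact Hx.
Qed.

Lemma ln_le_sub_1 z : 0 < z -> ln z <= z - 1.
Proof. intro Hz. pose proof (exp_ineq1_le (ln z)) as H. rewrite exp_ln in H; lra. Qed.

Lemma lambda_sub_2_le x :
  0 < x < 2 -> Psi x ^ 2 <= 4 * Theta x -> lambda x - 2 <= ln 4 / - ln (x / 2).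
Proof.
  intros Hx Hsq. pose proof (Psi_pos x ltac:(lra)) as HP. pose proof (Theta_pos x ltac:(lra)).
  pose proof (lambda_bounds x ltac:(lra)). pose proof (ln_Theta x ltac:(lra)).
  assert (Hhalf : ln (x / 2) < 0) by (rewrite <- ln_1; apply ln_increasing; lra).
  assert (HPx : ln (Psi x) <= ln (x / 2)) by (apply ln_le, Psi_le_half; lra).
  assert (Hnum : ln (Psi x ^ 2) <= ln 4 + ln (Theta x)) by (rewrite <- ln_mult by lra; apply ln_le; [apply pow_lt |]; lra).
  rewrite ln_pow in Hnum by exact HP. simpl INR in Hnum.
  apply (Rmult_le_reg_r (- ln (x / 2))); [lra |].
  replace (ln 4 / - ln (x / 2) * - ln (x / 2)) with (ln 4) by (field; lra). nra.
Qed.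

Lemma lambda_lt_near_0 eps : 0 < eps -> exists d, 0 < d /\ forall x, 0 < x < d -> lambda x < 2 + eps.
Proof.
  intro He. destruct red_bounds_near_0 as [d0 [Hd0 Hnear]].
  assert (Hln4 : 0 < ln 4) by (rewrite <- ln_1; apply ln_increasing; lra).
  pose proof (exp_pos (- (ln 4 / eps))).
  exists (Rmin d0 (2 * exp (- (ln 4 / eps)))). split; [apply Rmin_pos; lra |].
  intros x [Hx Hxd]. pose proof (Rmin_l d0 (2 * exp (- (ln 4 / eps)))).
  pose proof (Rmin_r d0 (2 * exp (- (ln 4 / eps)))).
  destruct (Hnear x ltac:(lra)) as [Hx1 [_ [HT _]]]. pose proof (Psi_red_le_1 x).
  assert (Hsq : Psi x ^ 2 <= 4 * Theta x).
  { rewrite Theta_eq_red, Psi_eq_red by lra. pose proof (Psi_red_pos x).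
    assert (Psi_red x ^ 2 <= 1) by (simpl; nra). assert (0 < x ^ 2) by (simpl; nra).
    replace ((x / 2 * Psi_red x) ^ 2) with (x ^ 2 / 4 * Psi_red x ^ 2) by field. nra. }
  pose proof (lambda_sub_2_le x ltac:(lra) Hsq).
  assert (HL : ln (x / 2) < - (ln 4 / eps)).
  { rewrite <- (ln_exp (- (ln 4 / eps))). apply ln_increasing; lra. }
  assert (Hq : 0 < ln 4 / eps) by (apply Rdiv_lt_0_compat; lra).
  assert (ln 4 / - ln (x / 2) < eps); [| lra].
  apply (Rmult_lt_reg_r (- ln (x / 2))); [lra |].
  replace (ln 4 / - ln (x / 2) * - ln (x / 2)) with (ln 4) by (field; lra).
  replace (ln 4) with (eps * (ln 4 / eps)) at 1 by (field; lra). nra.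
Qed.

Definition Psi_defect (x : R) : R := x * (1 - Psi x).

Lemma Psi_defect_lt_1 x : 0 < x -> Psi_defect x < 1.
Proof.
  intro Hx. pose proof (Theta_lt_Psi_sq x Hx) as Hsq. pose proof (Psi_pos x Hx).
  pose proof (Psi_lt_1 x Hx). unfold Theta, Psi_defect in *. simpl in Hsq.
  assert (Hprod : x * (1 - Psi x) * (1 + Psi x) < 2 * Psi x).
  { replace (2 * Psi x) with (x * (2 / x * Psi x)) by (field; lra). nra. }
  nra.
Qed.

Lemma is_derive_Psi_defect x :
  0 < x -> is_derive Psi_defect x (1 - Psi_defect x * (1 + Psi x)).
Proof.
  intro Hx. unfold Psi_defect. auto_derive.
  - exists (Psi' x). apply is_derive_Psi. lra.
  - change (fun t => Psi t) with Psi.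
    rewrite (is_derive_unique _ _ _ (is_derive_Psi x ltac:(lra))). unfold Psi'. field. lra.
Qed.

Lemma Psi_defect_eventually_lt eps :
  0 < eps -> exists M, forall x, M <= x -> Psi_defect x < / 2 + eps.
Proof.
  intro He. set (a := (/ 2 + eps) / eps).
  assert (Ha : 0 < a) by (apply Rdiv_lt_0_compat; lra).
  apply (eventually_below Psi_defect (fun x => 1 - Psi_defect x * (1 + Psi x)) a _ eps He).
  - intros x Hx. apply is_derive_Psi_defect. lra.
  - intros x Hx Hge.
    assert (Hx0 : 0 < x) by lra.
    pose proof (Psi_defect_lt_1 x Hx0) as Hlt. pose proof (Psi_pos x Hx0).
    assert (Hlow : 1 + Psi x > 2 - / x).
    { unfold Psi_defect in Hlt. apply (Rmult_lt_reg_l x); [exact Hx0 |].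
      replace (x * (2 - / x)) with (2 * x - 1) by (field; lra). lra. }
    assert (Hax : (/ 2 + eps) / x <= eps).
    { apply (Rmult_le_reg_r x); [exact Hx0 |].
      replace ((/ 2 + eps) / x * x) with (/ 2 + eps) by (field; lra).
      replace (/ 2 + eps) with (eps * a) by (unfold a; field; lra). nra. }
    assert (Hdiv : (/ 2 + eps) * / x <= eps) by exact Hax.
    nra.
Qed.

Lemma two_Psi_sq_le_lambda_defect x : 0 < x -> 2 * Psi x ^ 2 <= lambda x * Psi_defect x.
Proof.
  intro Hx. pose proof (Psi_pos x Hx). pose proof (Psi_lt_1 x Hx).
  pose proof (Theta_pos x Hx). pose proof (lambda_bounds x Hx). pose proof (ln_Theta x Hx).
  assert (HT : ln (Theta x) <= - (2 / x * Psi x)) by (pose proof (ln_le_sub_1 (Theta x)); unfold Theta in *; lra).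
  assert (HP : - ln (Psi x) <= (1 - Psi x) / Psi x).
  { rewrite <- ln_Rinv by lra. pose proof (ln_le_sub_1 (/ Psi x) ltac:(apply Rinv_0_lt_compat; lra)).
    replace ((1 - Psi x) / Psi x) with (/ Psi x - 1) by (field; lra). lra. }
  assert (Hu : 2 / x * Psi x <= lambda x * ((1 - Psi x) / Psi x)) by nra.
  unfold Psi_defect.
  replace (2 * Psi x ^ 2) with (2 / x * Psi x * (x * Psi x)) by (field; lra).
  replace (lambda x * (x * (1 - Psi x))) with (lambda x * ((1 - Psi x) / Psi x) * (x * Psi x))
    by (field; lra).
  apply Rmult_le_compat_r; [nra | exact Hu].
Qed.

Lemma lambda_gt_near_infty eps : 0 < eps -> exists M, forall x, M < x -> 4 - eps < lambda x.
Proof.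
  intro He. set (delta := eps / 16).
  assert (Hd : 0 < delta) by (unfold delta; lra).
  destruct (Psi_defect_eventually_lt delta Hd) as [M1 HM1].
  exists (Rmax M1 (/ delta)). intros x Hx.
  pose proof (Rmax_l M1 (/ delta)). pose proof (Rmax_r M1 (/ delta)).
  assert (Hinv : 0 < / delta) by (apply Rinv_0_lt_compat, Hd).
  assert (Hx0 : 0 < x) by lra.
  specialize (HM1 x ltac:(lra)).
  pose proof (Psi_defect_lt_1 x Hx0) as Hy1. pose proof (lambda_bounds x Hx0).
  pose proof (two_Psi_sq_le_lambda_defect x Hx0) as Hlow.
  assert (Hxd : / x < delta).
  { rewrite <- (Rinv_inv delta). apply Rinv_lt_contravar; [nra | lra]. }
  assert (HPsi : 1 - delta < Psi x).
  { unfold Psi_defect in Hy1. assert (1 - Psi x < / x); [| lra].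
    apply (Rmult_lt_reg_l x); [exact Hx0 |]. replace (x * / x) with 1 by (field; lra). lra. }
  assert (Hsq : 1 - 2 * delta < Psi x ^ 2) by (pose proof (Psi_lt_1 x Hx0); simpl; nra).
  assert (Hlam : 2 - 4 * delta < lambda x * (/ 2 + delta)) by nra.
  unfold delta in *. nra.
Qed.

Lemma lambda_lim_0 : filterlim lambda (at_right 0) (locally 2).
Proof.
  apply filterlim_locally. intros eps.
  destruct (lambda_lt_near_0 eps (cond_pos eps)) as [d [Hd Hnear]].
  exists (mkposreal d Hd). intros x Hx Hpos. change (Rabs (x - 0) < d) in Hx.
  change (Rabs (lambda x - 2) < eps). rewrite Rminus_0_r, Rabs_pos_eq in Hx by lra.
  pose proof (lambda_bounds x Hpos). specialize (Hnear x (conj Hpos Hx)).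
  apply Rabs_def1; lra.
Qed.

Lemma lambda_lim_p_infty : filterlim lambda (Rbar_locally p_infty) (locally 4).
Proof.
  apply filterlim_locally. intros eps.
  destruct (lambda_gt_near_infty eps (cond_pos eps)) as [M HM].
  exists (Rmax M 0). intros x Hx. change (Rabs (lambda x - 4) < eps).
  pose proof (Rmax_l M 0). pose proof (Rmax_r M 0).
  pose proof (lambda_bounds x ltac:(lra)). specialize (HM x ltac:(lra)).
  apply Rabs_def1; lra.
Qed.

Lemma exists_p_lambda_le_1 p : p < 1 / 2 -> exists x, 0 < x /\ p * lambda x <= 1.
Proof.
  intro Hp. destruct (Rle_or_lt p 0) as [Hp0 | Hp0].
  - exists 1. pose proof (lambda_bounds 1 Rlt_0_1). split; [lra | nra].
  - assert (Hinv : 2 < / p).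
    { replace 2 with (/ (1 / 2)) by field. apply Rinv_lt_contravar; nra. }
    destruct (lambda_lt_near_0 (/ p - 2) ltac:(lra)) as [d [Hd Hnear]].
    exists (d / 2). split; [lra |].
    specialize (Hnear (d / 2) ltac:(lra)).
    apply (Rmult_le_reg_l (/ p)); [apply Rinv_0_lt_compat, Hp0 |].
    replace (/ p * (p * lambda (d / 2))) with (lambda (d / 2)) by (field; lra). lra.
Qed.

Lemma exists_q_lambda_ge_1 q : 1 / 4 < q -> exists x, 0 < x /\ 1 <= q * lambda x.
Proof.
  intro Hq. assert (Hinv : / q < 4).
  { replace 4 with (/ (1 / 4)) by field. apply Rinv_lt_contravar; nra. }
  destruct (lambda_gt_near_infty (4 - / q) ltac:(lra)) as [M HM].
  set (x := Rmax M 0 + 1). pose proof (Rmax_l M 0). pose proof (Rmax_r M 0).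
  exists x. split; [unfold x; lra |].
  specialize (HM x ltac:(unfold x; lra)).
  apply (Rmult_le_reg_l (/ q)); [apply Rinv_0_lt_compat; lra |].
  replace (/ q * (q * lambda x)) with (lambda x) by (field; lra). lra.
Qed.

Lemma sqrt_lt_of_lt_sq s r : 0 < r -> s < r ^ 2 -> sqrt s < r.
Proof.
  intros Hr Hs. rewrite <- (sqrt_pow2 r) by lra.
  destruct (Rlt_or_le s 0) as [Hneg | Hnonneg].
  - rewrite (sqrt_neg_0 s) by lra. rewrite sqrt_pow2; lra.
  - apply sqrt_lt_1_alt. lra.
Qed.

Lemma lt_Rpower_quarter s r : 0 < r -> r ^ 4 < s -> r < Rpower s (1 / 4).
Proof.
  intros Hr Hs. assert (H4 : 0 < r ^ 4) by (apply pow_lt, Hr).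
  assert (Hln : ln (r ^ 4) < ln s) by (apply ln_increasing; lra).
  rewrite ln_pow in Hln by exact Hr. simpl INR in Hln.
  unfold Rpower. rewrite <- (exp_ln r) at 1 by exact Hr. apply exp_increasing. lra.
Qed.

Theorem mainTheorem2 :
  (forall x : R, 0 < x -> 2 < lambda x < 4) /\
  filterlim lambda (at_right 0) (locally 2) /\
  filterlim lambda (Rbar_locally p_infty) (locally 4) /\
  (* the resulting inequality for K > 1, r > 0 with r = Psi(2Kr) *)
  (forall K r : R, 1 < K -> 0 < r -> r = Psi (2 * K * r) ->
     sqrt (1 - 1 / K) < r < Rpower (1 - 1 / K) (1 / 4)) /\
  (* the exponent 1/2 cannot be decreased *)
  (forall p : R, p < 1 / 2 -> exists K r : R,
     1 < K /\ 0 < r /\ r = Psi (2 * K * r) /\ r <= Rpower (1 - 1 / K) p) /\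
  (* the exponent 1/4 cannot be increased *)
  (forall q : R, 1 / 4 < q -> exists K r : R,
     1 < K /\ 0 < r /\ r = Psi (2 * K * r) /\ Rpower (1 - 1 / K) q <= r).
Proof.
  split; [exact lambda_bounds |].
  split; [exact lambda_lim_0 |].
  split; [exact lambda_lim_p_infty |].
  split; [| split].
  - intros K r HK Hr Hfix. destruct (fixed_point_bounds K r HK Hr Hfix) as [H4 H2].
    split; [apply sqrt_lt_of_lt_sq | apply lt_Rpower_quarter]; assumption.
  - intros p Hp. destruct (exists_p_lambda_le_1 p Hp) as [x [Hx Hpx]].
    exists (K_of x), (Psi x). rewrite one_sub_inv_K_of, two_K_of_Psi by exact Hx.
    repeat split; [apply K_of_gt_1 | apply Psi_pos | apply Psi_le_Rpower_Theta]; assumption.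
  - intros q Hq. destruct (exists_q_lambda_ge_1 q Hq) as [x [Hx Hqx]].
    exists (K_of x), (Psi x). rewrite one_sub_inv_K_of, two_K_of_Psi by exact Hx.
    repeat split; [apply K_of_gt_1 | apply Psi_pos | apply Rpower_Theta_le_Psi]; assumption.
Qed.
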